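(* Fix an integer $L \ge 2$ and a starting state $s_0 \in \{1,\dots,L-1\}$. Consider the one-dimensional gambler's ruin POMDP described in the context, and a policy $\pi_{\vec\theta}$ that does not depend on the state, with $p = \pi(a=+1\mid\vec\theta)$. Then the episodic return $G$ of an on-policy trajectory started at $s_0$ satisfies, for every $g$, \[ \Pr\{G = g\} = \sum_{(s,t)\in C_g} (1-p)^{\,t - r_{s,t}}\, p^{\,r_{s,t}}\, a_{s_0,L}(t, r_{s,t}), \] where $C_g = \{(s,t) : s\in\{0,L\},\ t \ge 1,\ g = \lambda_s - t\}$, $r_{s,t} = \tfrac12 (s - s_0 + t)$ is the number of steps to the right, and $a_{s_0,L}(t,r_{s,t})$, the number of paths from $s_0$ that end on the terminating state $s$ at step $t$ (and not earlier) after taking $r_{s,t}$ steps to the right, is given by \[ a_{s_0,L}(t,r_{s,t}) = \sum_{i=-\infty}^{\infty}\left[\binom{t'}{r' + iL} - \binom{t'}{(r'+s_0) + iL}\right] = \frac{4}{L}\sum_{k=0}^{\lfloor (L-1)/2\rfloor} 2^{t'}\cos^{t'}\!\Big(\frac{\pi k}{L}\Big)\sin\!\Big(\frac{\pi k}{L}s_0\Big)\sin\!\Big(\frac{\pi k}{L}(2r' + s_0 - t')\Big), \] with $t' = t-1$, and $r' = r_{s,t}$ if $s = 0$, $r' = r_{s,t}-1$ if $s = L$. (Terms with $s - s_0 + t$ odd are unreachable and contribute $0$.)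
   Context: The 1D gambler's ruin POMDP has state space $\{0,1,\dots,L\}$, a single starting state $s_0$, two terminating (absorbing) states $0$ and $L$, and two actions $a\in\{-1,+1\}$ which move the agent from state $s$ to $s+a$ deterministically. The agent receives no information about the state (it does not observe $s_0$ or its current state), so its policy is a fixed distribution over $\{-1,+1\}$ parametrized by $\vec\theta$. Rewards are undiscounted: each step costs $-1$, and reaching terminating state $s\in\{0,L\}$ gives a bonus $\lambda_s$, so a trajectory that first reaches terminating state $s$ at step $t$ has return $G = \lambda_s - t$. Binomial coefficients $\binom{n}{k}$ are $0$ when $k<0$ or $k>n$. *)

From HB Require Import structures.
From mathcomp Require Import all_boot all_order all_algebra.
From mathcomp Require Import all_classical all_reals all_analysis.
Set Implicit Arguments. Unset Strict Implicit. Unset Printing Implicit Defensive.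
Import Order.TTheory GRing.Theory Num.Theory numFieldNormedType.Exports.
Local Open Scope ring_scope.
Local Open Scope classical_set_scope.

(* An action sequence is a [seq bool]: [true] = action +1, [false] = action -1.
   [pos s0 w k] is the state after the first [k] actions of [w] from [s0]. *)
Definition pos (s0 : nat) (w : seq bool) (k : nat) : int :=
  (s0%:Z + (count id (take k w))%:Z - (count negb (take k w))%:Z)%R.

Definition terminal (L : nat) (x : int) : bool := (x == 0) || (x == L%:Z).

Definition first_hit (L s0 : nat) (w : seq bool) : bool :=
  [forall k : 'I_(size w), (0 < k)%N ==>
      ((0 < pos s0 w k) && (pos s0 w k < L%:Z))]
  && terminal L (pos s0 w (size w)).

Definition lam {R : realType} (lam0 lamL : R) (s : int) : R :=
  if s == 0 then lam0 else lamL.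

(* probability of the action prefix w under the state-independent policy
   with p = pi(a = +1) *)
Definition weight {R : realType} (p : R) (w : seq bool) : R :=
  p ^+ count id w * (1 - p) ^+ count negb w.

(* Pr{ the episode terminates at step t and G = g }, G = lambda_s - t *)
Definition prob_term_at {R : realType} (L s0 : nat) (p lam0 lamL g : R)
    (t : nat) : R :=
  \sum_(w : t.-tuple bool |
          first_hit L s0 w && (lam lam0 lamL (pos s0 w t) - t%:R == g))
     weight p w.

Definition a_paths (L s0 t : nat) (r : int) : nat :=
  #|[pred w : t.-tuple bool | ((count id w)%:Z == r) && first_hit L s0 w]|.

Definition Cg {R : realType} (L : nat) (lam0 lamL g : R) : set (nat * nat) :=
  [set st | (st.1 = 0%N \/ st.1 = L) /\ (1 <= st.2)%N /\
            g = lam lam0 lamL st.1%:Z - st.2%:R].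

Definition r_st (s0 s t : nat) : int := ((s%:Z - s0%:Z + t%:Z) %/ 2)%Z.

Definition term {R : realType} (L s0 : nat) (p : R) (st : nat * nat) : R :=
  if odd (st.1 + s0 + st.2) then 0
  else let r := r_st s0 st.1 st.2 in
       (1 - p) ^ (st.2%:Z - r) * p ^ r * (a_paths L s0 st.2 r)%:R.

Definition binz (n : nat) (k : int) : nat :=
  match k with Posz k' => 'C(n, k') | Negz _ => 0%N end.

(* sum_{i = -oo}^{oo} f i = x (symmetric partial sums) *)
Definition zsum_to {R : realType} (f : int -> R) (x : R) : Prop :=
  (fun N : nat => \sum_(i < (2 * N).+1) f (i%:Z - N%:Z)) @ \oo --> x.

Definition r'_st (s0 s t : nat) : int :=
  if s == 0%N then r_st s0 s t else r_st s0 s t - 1.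

Definition binom_term {R : realType} (L s0 t' : nat) (r' : int) (i : int) : R :=
  (binz t' (r' + i * L%:Z))%:R - (binz t' ((r' + s0%:Z) + i * L%:Z))%:R.

Definition trig_sum {R : realType} (L s0 t' : nat) (r' : int) : R :=
  4 / L%:R * \sum_(k < ((L - 1)./2).+1)
     (2 ^+ t' * cos (pi * k%:R / L%:R) ^+ t'
      * sin (pi * k%:R / L%:R * s0%:R)
      * sin (pi * k%:R / L%:R * ((2 * r' + s0%:Z - t'%:Z)%:~R))).

From HB Require Import structures.
From mathcomp Require Import all_boot all_order all_algebra.
From mathcomp Require Import all_classical all_reals all_analysis.
From mathcomp Require Import zify ring lra.
Set Implicit Arguments. Unset Strict Implicit. Unset Printing Implicit Defensive.
Import Order.TTheory GRing.Theory Num.Theory numFieldNormedType.Exports.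
Local Open Scope ring_scope.
Local Open Scope classical_set_scope.

(* Splitting a path on its first action, the number h_n(a) of length-n action
   sequences from a that first reach the terminating state s at step n obeys
   h_{n+2}(a+1) = h_{n+1}(a+2) + h_{n+1}(a), with h = 0 at the absorbing states
   0 and L and h_1(a) = [a = e], e the neighbour of s.  This discrete heat
   equation on {1,...,L-1} with Dirichlet boundary conditions has a unique
   solution, and two explicit ones: the method of images (binomial coefficients
   reflected about 0 and L; the symmetric partial sums are exact as soon as they
   contain the images i with |i| <= n), and the expansion in the eigenvectors
   sin(pi k a / L) of the discrete Laplacian, whose initial condition is their
   orthogonality.  Folding the sine sum by k <-> L - k leaves k <= (L-1)/2; for
   even L this needs cos(pi/2)^(t-1) = 0, whence t >= 2.  A path of length t
   ending at s has weight p^r (1-p)^(t-r), and only the at most two pairs of C_g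
   contribute, so the series of probabilities is eventually constant. *)

Lemma big_tupleS (R : Type) (idx : R) (op : Monoid.com_law idx)
    (T : finType) n (F : n.+1.-tuple T -> R) :
  \big[op/idx]_(w : n.+1.-tuple T) F w =
  \big[op/idx]_(x : T) \big[op/idx]_(w : n.-tuple T) F [tuple of x :: w].
Proof.
rewrite pair_big (reindex (fun p : T * n.-tuple T => [tuple of p.1 :: p.2])) //=.
exists (fun w : n.+1.-tuple T => (thead w, [tuple of behead w])) => [[x w] _|w _].
  by congr pair; apply: val_inj.
by rewrite [RHS]tuple_eta.
Qed.

Lemma big_tuple0 (R : Type) (idx : R) (op : Monoid.com_law idx)
    (T : finType) (F : 0.-tuple T -> R) :
  \big[op/idx]_(w : 0.-tuple T) F w = F [tuple].
Proof. by rewrite (big_pred1 [tuple]) // => w; apply/esym/eqP; exact: tuple0. Qed.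

Lemma match_nil_tupleS (T A : Type) n (w : n.+1.-tuple T) (x y : A) :
  (if val w is [::] then x else y) = y.
Proof. by case: w => -[]. Qed.

Section ReflectedSum.
Variables (V : zmodType) (L : nat) (T : nat -> V).
Hypothesis T_reflect : forall k, (0 < k < L)%N -> T (L - k) = T k.

Lemma sum_nat_reflect c : (0 < c <= L)%N ->
  \sum_(c <= k < L) T k = \sum_(1 <= k < (L - c).+1) T k.
Proof.
move=> c_le; rewrite big_nat_rev.
have c_gt0 : (1 <= c)%N by case/andP: c_le.
rewrite -[c in \sum_(c <= _ < _) _](subnKC c_gt0) big_addn.
rewrite (_ : L - (c - 1) = (L - c).+1)%N; last lia.
by apply: eq_big_nat => k k_lt; rewrite -T_reflect; [congr T|]; lia.
Qed.

Lemma sum_nat_fold_half m : T 0 = 0 ->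
  L = m.*2.+1 \/ L = m.*2.+2 /\ T m.+1 = 0 ->
  \sum_(0 <= k < L) T k = (\sum_(0 <= k < m.+1) T k) *+ 2.
Proof.
move=> T0 L_eq; have L_gt : (m.+1 <= L)%N by case: L_eq => [|[]] ->; lia.
rewrite (@big_cat_nat _ _ _ m.+1) //= mulr2n.
congr (_ + _); rewrite [in RHS]big_ltn // T0 add0r.
case: L_eq => [L_odd | [L_even T_mid]].
  by rewrite sum_nat_reflect ?L_odd; [congr (\sum_(1 <= k < _) _); lia | lia].
rewrite big_ltn ?T_mid ?add0r ?sum_nat_reflect; try lia.
by rewrite L_even; congr (\sum_(1 <= k < _) _); lia.
Qed.

End ReflectedSum.

Lemma sin_pi_nat (R : realType) k : sin (pi * k%:R) = 0 :> R.
Proof. by rewrite mulr_natr -[_ *+ _]add0r (alternatingn (@sinDpi R)) sin0 mulr0. Qed.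

Lemma cos_pi_nat (R : realType) k : cos (pi * k%:R) = (-1) ^+ k :> R.
Proof. by rewrite mulr_natr -[_ *+ _]add0r (alternatingn (@cosDpi R)) cos0 mulr1. Qed.

Lemma dirichlet_kernel (R : realType) (x : R) M :
  2 * sin (x / 2) * \sum_(k < M.+1) cos (k%:R * x) =
  sin ((M%:R + 2^-1) * x) + sin (x / 2).
Proof.
elim: M => [|M IH].
  by rewrite big_ord1 mul0r cos0 mulr1 add0r (mulrC 2^-1) mulr2n mulrDl mul1r.
rewrite big_ord_recr /= mulrDr IH.
have -> : (M%:R + 2^-1) * x = M.+1%:R * x - x / 2 by rewrite -natr1; field.
have -> : (M.+1%:R + 2^-1) * x = M.+1%:R * x + x / 2 by field.
rewrite sinB sinD; ring.
Qed.

Lemma sum_cos_multiple (R : realType) (L m : nat) : (0 < m < 2 * L)%N ->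
  \sum_(k < L) cos (k%:R * (pi * m%:R / L%:R)) = (1 - (-1) ^+ m) / 2 :> R.
Proof.
case: L => [|L] m_lt; first by lia.
have L_neq0 : (L.+1%:R : R) != 0 by rewrite pnatr_eq0.
set x := pi * m%:R / L.+1%:R.
have sin_pos : 0 < sin (x / 2).
  have -> : x / 2 = pi * (m%:R / (2 * L.+1%:R)) by rewrite /x; field.
  apply: sin_gt0_pi; rewrite mulr_gt0 ?pi_gt0 ?divr_gt0 ?ltr0n //=; try lia.
  rewrite -[ltRHS]mulr1 ltr_pM2l ?pi_gt0 // ltr_pdivrMr ?mul1r; last first.
    by rewrite mulr_gt0 ?ltr0n.
  by rewrite -natrM ltr_nat; lia.
have := dirichlet_kernel x L.
have -> : (L%:R + 2^-1) * x = pi * m%:R - x / 2 by rewrite /x -natr1; field.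
rewrite sinB sin_pi_nat cos_pi_nat mul0r sub0r => dirichlet.
apply: (mulfI (lt0r_neq0 sin_pos)); apply: (@mulfI _ 2); first by rewrite pnatr_eq0.
by rewrite mulrA dirichlet; field.
Qed.

Lemma sum_sin_orthogonal (R : realType) (L a e : nat) :
  (0 < a < L)%N -> (0 < e < L)%N ->
  \sum_(k < L) sin (pi * k%:R / L%:R * a%:R) * sin (pi * k%:R / L%:R * e%:R)
  = (a == e)%:R * L%:R / 2 :> R.
Proof.
wlog e_le_a : a e / (e <= a)%N.
  move=> wlog_ea a_lt e_lt; have [e_le_a|a_lt_e] := leqP e a; first exact: wlog_ea.
  rewrite eq_sym; under eq_bigr do rewrite mulrC.
  exact: wlog_ea (ltnW a_lt_e) e_lt a_lt.
move=> a_lt e_lt; have L_neq0 : (L%:R : R) != 0 by rewrite pnatr_eq0; lia.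
have sin_prod k : sin (pi * k%:R / L%:R * a%:R) * sin (pi * k%:R / L%:R * e%:R) =
    (cos (k%:R * (pi * (a - e)%:R / L%:R))
     - cos (k%:R * (pi * (a + e)%:R / L%:R))) / 2 :> R.
  rewrite natrB // natrD.
  have -> : k%:R * (pi * (a%:R - e%:R) / L%:R) =
    pi * k%:R / L%:R * a%:R - pi * k%:R / L%:R * e%:R :> R by field.
  have -> : k%:R * (pi * (a%:R + e%:R) / L%:R) =
    pi * k%:R / L%:R * a%:R + pi * k%:R / L%:R * e%:R :> R by field.
  by rewrite cosB cosD; field.
under eq_bigr do rewrite sin_prod.
rewrite -big_distrl sumrB /= [X in _ - X]sum_cos_multiple; last lia.
have [<-|e_neq_a] := eqVneq e a.
  under eq_bigr do rewrite subnn mulr0 mul0r mulr0 cos0.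
  rewrite sumr_const card_ord addnn -signr_odd odd_double expr0.
  by rewrite subrr mul0r subr0 mul1r.
rewrite sum_cos_multiple; last lia.
have -> : (-1) ^+ (a + e) = (-1) ^+ (a - e) :> R.
  by rewrite -signr_odd oddD -oddB // signr_odd.
by rewrite subrr !mul0r.
Qed.

Lemma binz_neg n (k : int) : k < 0 -> binz n k = 0%N.
Proof. by case: k. Qed.

Lemma binz_small n (k : int) : n%:Z < k -> binz n k = 0%N.
Proof. by case: k => [k|//] /= n_lt; rewrite bin_small //; lia. Qed.

Lemma binz0 (k : int) : binz 0 k = (k == 0).
Proof. by case: k => [[|k]|k]. Qed.

Lemma binzS n (k : int) : binz n.+1 k = (binz n k + binz n (k - 1))%N.
Proof.
case: k => [[|k]|k] //=; first by rewrite !bin0.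
by rewrite subn1 /= binS.
Qed.

Lemma addr_mulz_eq0 (L : nat) (x i : int) : - L%:Z < x < L%:Z ->
  (x + i * L%:Z == 0) = (i == 0) && (x == 0).
Proof.
move=> x_lt; apply/eqP/andP => [x_eq|[/eqP-> /eqP->] //].
have i0 : i = 0 by nia.
by move: x_eq; rewrite i0 mul0r addr0 => ->.
Qed.

Lemma pos0 s0 w : pos s0 w 0 = s0%:Z.
Proof. by rewrite /pos take0 /= subr0 addr0. Qed.

Lemma pos_cons_true s0 w k : pos s0 (true :: w) k.+1 = pos s0.+1 w k.
Proof. rewrite /pos /= -addn1 PoszD; lia. Qed.

Lemma pos_cons_false s0 w k : pos s0.+1 (false :: w) k.+1 = pos s0 w k.
Proof. rewrite /pos /= -(addn1 s0) PoszD; lia. Qed.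

Lemma pos_size s0 (w : seq bool) :
  pos s0 w (size w) = s0%:Z + 2 * (count id w)%:Z - (size w)%:Z.
Proof.
rewrite /pos take_size; have := count_predC id w.
by rewrite (@eq_count _ (predC id) negb) //; lia.
Qed.

Lemma pos_tuple s0 t (w : t.-tuple bool) :
  pos s0 w t = s0%:Z + 2 * (count id w)%:Z - t%:Z.
Proof. by have := pos_size s0 w; rewrite size_tuple. Qed.

Lemma pos_tuple_eq s0 s t (w : t.-tuple bool) : (pos s0 w t == s%:Z) =
  ~~ odd (s + s0 + t) && ((count id w)%:Z == r_st s0 s t).
Proof.
by rewrite -eqb0 -modn2 pos_tuple /r_st; lia.
Qed.

Definition interior (L : nat) (x : int) : bool := (0 < x) && (x < L%:Z).

Lemma first_hitE L s0 (w : seq bool) : first_hit L s0 w =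
  all (interior L \o pos s0 w) (iota 1 (size w).-1)
  && terminal L (pos s0 w (size w)).
Proof.
rewrite /first_hit; congr andb; apply/forallP/allP => [H k | H k].
  rewrite mem_iota => /andP[k1 kw]; have kw' : (k < size w)%N by lia.
  exact: (implyP (H (Ordinal kw')) k1).
by apply/implyP => k0; apply: H; rewrite mem_iota; have := ltn_ord k; lia.
Qed.

Lemma first_hit_cons_true L s0 (w : seq bool) : first_hit L s0 (true :: w) =
  if w is [::] then terminal L s0.+1%:Z
  else interior L s0.+1%:Z && first_hit L s0.+1 w.
Proof.
rewrite !first_hitE /= pos_cons_true; case: w => [|b w] /=; first by rewrite pos0.
rewrite (iotaDl 1 1) all_map pos_cons_true pos0 andbA; congr (_ && _ && _).
by apply: eq_all => k /=; rewrite pos_cons_true.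
Qed.

Lemma first_hit_cons_false L s0 (w : seq bool) : first_hit L s0.+1 (false :: w) =
  if w is [::] then terminal L s0%:Z
  else interior L s0%:Z && first_hit L s0 w.
Proof.
rewrite !first_hitE /= pos_cons_false; case: w => [|b w] /=; first by rewrite pos0.
rewrite (iotaDl 1 1) all_map pos_cons_false pos0 andbA; congr (_ && _ && _).
by apply: eq_all => k /=; rewrite pos_cons_false.
Qed.

Lemma first_hit_terminal L s0 (w : seq bool) :
  first_hit L s0 w -> terminal L (pos s0 w (size w)).
Proof. by case/andP. Qed.

Definition hit_count (L : nat) (s : int) (n s0 : nat) : nat :=
  \sum_(w : n.-tuple bool) (first_hit L s0 w && (pos s0 w n == s)).

Definition hit_count_in (L : nat) (s : int) (n s0 : nat) : nat :=
  if interior L s0%:Z then hit_count L s n s0 else 0.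

Lemma hit_countSS L s n s0 :
  hit_count L s n.+2 s0.+1 =
  (hit_count_in L s n.+1 s0.+2 + hit_count_in L s n.+1 s0)%N.
Proof.
rewrite /hit_count big_tupleS big_bool /=; congr (_ + _)%N.
  under eq_bigr => w _ do
    rewrite first_hit_cons_true match_nil_tupleS pos_cons_true -andbA.
  by rewrite /hit_count_in; case: (interior _ _) => //; rewrite big1.
under eq_bigr => w _ do
  rewrite first_hit_cons_false match_nil_tupleS pos_cons_false -andbA.
by rewrite /hit_count_in; case: (interior _ _) => //; rewrite big1.
Qed.

Lemma hit_count1 L s s0 : terminal L s ->
  hit_count L s 1 s0.+1 = ((s0.+2%:Z == s) + (s0%:Z == s))%N.
Proof.
move=> s_terminal; rewrite /hit_count big_tupleS big_bool !big_tuple0 /=.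
rewrite first_hit_cons_true first_hit_cons_false pos_cons_true pos_cons_false !pos0.
by congr (_ + _)%N; case: eqP => [->|]; rewrite ?s_terminal ?andbF.
Qed.

Definition neighbour (L : nat) (s : int) : nat := if s == 0 then 1 else L.-1.

Lemma hit_count1_neighbour L s a : (2 <= L)%N -> terminal L s -> (0 < a < L)%N ->
  hit_count L s 1 a = (a == neighbour L s).
Proof.
move=> L_ge2 s_terminal; case: a => [|a] a_lt; first by case/andP: a_lt.
rewrite hit_count1 // /neighbour; case/orP: s_terminal => /eqP->; rewrite ?eqxx.
  by case: a a_lt => [|a] _ //=; rewrite !eqz_nat.
have -> : (L%:Z == 0) = false by apply/eqP; lia.
have -> : (a%:Z == L%:Z) = false by apply/eqP; lia.
by rewrite addn0 eqz_nat; congr nat_of_bool; apply/eqP/eqP; lia.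
Qed.

Section HitCountUniqueness.
Variables (R : numDomainType) (L : nat) (s : int) (N : nat) (X : nat -> int -> R).
Hypothesis X_init : forall a : nat, (0 < a < L)%N -> X 0 a%:Z = (hit_count L s 1 a)%:R.
Hypothesis X_boundary : forall n, (n < N)%N -> X n 0 = 0 /\ X n L%:Z = 0.
Hypothesis X_rec : forall n a, X n.+1 a = X n (a + 1) + X n (a - 1).

Lemma hit_count_solution n a : (n <= N)%N -> (0 < a < L)%N ->
  (hit_count L s n.+1 a)%:R = X n a%:Z.
Proof.
elim: n a => [|n IH] a n_le a_lt; first by rewrite X_init.
case: a a_lt => [|a] a_lt; first by case/andP: a_lt.
have hit_in b : (b <= L)%N -> (hit_count_in L s n.+1 b)%:R = X n b%:Z.
  move=> b_le; rewrite /hit_count_in /interior; case: ifP => [/andP[b_gt0 b_lt]|b_out].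
    by apply: IH; [exact: ltnW | lia].
  have [->|b_neq_L] := eqVneq b L; first by rewrite (proj2 (X_boundary n_le)).
  have -> : b = 0%N by move: b_out b_le b_neq_L; lia.
  by rewrite (proj1 (X_boundary n_le)).
rewrite hit_countSS natrD X_rec !hit_in; try lia.
by congr (X n _ + X n _); lia.
Qed.

End HitCountUniqueness.

Definition sine_mode (R : realType) (L e n : nat) (a : int) (k : nat) : R :=
  2 ^+ n * cos (pi * k%:R / L%:R) ^+ n
  * sin (pi * k%:R / L%:R * a%:~R) * sin (pi * k%:R / L%:R * e%:R).

Definition sine_solution (R : realType) (L e n : nat) (a : int) : R :=
  2 / L%:R * \sum_(k < L) sine_mode R L e n a k.

Section SineSolution.
Variables (R : realType) (L e : nat).

Lemma sine_modeS n a k : sine_mode R L e n.+1 a k =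
  sine_mode R L e n (a + 1) k + sine_mode R L e n (a - 1) k.
Proof. rewrite /sine_mode intrD intrB mulrDr mulrBr mulr1 sinD sinB !exprS; ring. Qed.

Lemma sine_solutionS n a : sine_solution R L e n.+1 a =
  sine_solution R L e n (a + 1) + sine_solution R L e n (a - 1).
Proof.
rewrite /sine_solution -mulrDr -big_split /=.
by congr (_ * _); apply: eq_bigr => k _; rewrite sine_modeS.
Qed.

Lemma sine_solution_at0 n : sine_solution R L e n 0 = 0.
Proof.
rewrite /sine_solution big1 ?mulr0 // => k _.
by rewrite /sine_mode mulr0 sin0 mulr0 mul0r.
Qed.

Lemma sine_solution_atL n : (0 < L)%N -> sine_solution R L e n L%:Z = 0.
Proof.
move=> L_gt0; have L_neq0 : (L%:R : R) != 0 by rewrite pnatr_eq0 -lt0n.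
rewrite /sine_solution big1 ?mulr0 // => k _; rewrite /sine_mode.
have -> : pi * k%:R / L%:R * L%:R = pi * k%:R :> R by field.
by rewrite sin_pi_nat mulr0 mul0r.
Qed.

Lemma sine_solution_init (a : nat) : (0 < a < L)%N -> (0 < e < L)%N ->
  sine_solution R L e 0 a%:Z = (a == e)%:R.
Proof.
move=> a_lt e_lt; have L_neq0 : (L%:R : R) != 0 by rewrite pnatr_eq0; lia.
rewrite /sine_solution /sine_mode; under eq_bigr do rewrite !expr0 !mul1r.
by rewrite sum_sin_orthogonal //; field.
Qed.

Lemma sine_mode_reflect n (a : nat) k : (0 < L)%N -> (k <= L)%N ->
  ~~ odd (n + a + e) -> sine_mode R L e n a%:Z (L - k) = sine_mode R L e n a%:Z k.
Proof.
move=> L_gt0 k_le even_nae; have L_neq0 : (L%:R : R) != 0 by rewrite pnatr_eq0 -lt0n.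
rewrite /sine_mode; set y := pi * k%:R / L%:R.
have -> : pi * (L - k)%:R / L%:R = pi - y :> R by rewrite natrB // /y; field.
rewrite cosB cospi sinpi mul0r addr0 mulN1r !mulrBl !sinB !sin_pi_nat !cos_pi_nat.
rewrite !mul0r !sub0r (exprNn (cos y)).
have sign : ((-1) ^+ n * (-1) ^+ a * (-1) ^+ e : R) = 1.
  by rewrite -!exprD -signr_odd (negbTE even_nae).
transitivity (2 ^+ n * cos y ^+ n * sin (y * a%:R) * sin (y * e%:R)
  * ((-1) ^+ n * (-1) ^+ a * (-1) ^+ e)); first ring.
by rewrite sign mulr1.
Qed.

End SineSolution.

Lemma trig_sum_sine_solution (R : realType) L e n (a : nat) (r' : int) :
  (0 < a < L)%N -> odd L || (0 < n)%N -> 2 * r' + a%:Z - n%:Z = e%:Z ->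
  trig_sum L a n r' = sine_solution R L e n a%:Z.
Proof.
move=> a_lt L_odd_or_n r'_eq; set m := (L - 1)./2.
have L_neq0 : (L%:R : R) != 0 by rewrite pnatr_eq0; lia.
have even_nae : ~~ odd (n + a + e) by rewrite -eqb0 -modn2; lia.
have L_shape : L = m.*2.+1 \/ L = m.*2.+2.
  by have := odd_double_half (L - 1); rewrite -/m; case: odd => /=; lia.
have mid_mode : L = m.*2.+2 -> sine_mode R L e n a m.+1 = 0.
  move=> L_eq; have n_gt0 : (0 < n)%N by move: L_odd_or_n; rewrite L_eq /= odd_double.
  rewrite /sine_mode; have -> : pi * m.+1%:R / L%:R = pi / 2 :> R.
    by rewrite L_eq -[m.*2.+2]/(m.+1).*2 -muln2 natrM; field.
  by rewrite cos_pihalf expr0n gtn_eqF // mulr0 !mul0r.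
have fold : \sum_(k < L) sine_mode R L e n a k =
            (\sum_(k < m.+1) sine_mode R L e n a k) *+ 2.
  rewrite -!(big_mkord xpredT); apply: sum_nat_fold_half => [k k_lt||].
  - by rewrite sine_mode_reflect //; lia.
  - by rewrite /sine_mode !(mulr0, mul0r, sin0).
  - by case: L_shape => L_eq; [left | right; split; last exact: mid_mode].
rewrite /trig_sum /sine_solution r'_eq fold mulrnAr -mulrnAl.
by congr (_ * _); field.
Qed.

Definition image_term (R : pzRingType) (L n : nat) (a r : int) (i : int) : R :=
  (binz n (r + i * L%:Z))%:R - (binz n ((r + a) + i * L%:Z))%:R.

Definition image_sum (R : pzRingType) (L n N : nat) (a r : int) : R :=
  \sum_(j < (2 * N).+1) image_term R L n a r (j%:Z - N%:Z).

(* Without the parity guard the initial condition would fail at a = e - 1. *)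
Definition image_solution (R : pzRingType) (L e N n : nat) (a : int) : R :=
  if ((e%:Z - a + n%:Z) %% 2 == 0)%Z
  then image_sum R L n N a ((e%:Z - a + n%:Z) %/ 2)%Z else 0.

Section ImageSolution.
Variables (R : pzRingType) (L : nat).

Lemma image_termS n a r i : image_term R L n.+1 a r i =
  image_term R L n (a + 1) (r - 1) i + image_term R L n (a - 1) r i.
Proof.
rewrite /image_term !binzS !natrD.
have -> : r + i * L%:Z - 1 = r - 1 + i * L%:Z by ring.
have -> : r - 1 + (a + 1) = r + a by ring.
have -> : r + a + i * L%:Z - 1 = r + (a - 1) + i * L%:Z by ring.
by rewrite [X in _ - X]addrC opprD addrACA [RHS]addrC.
Qed.

Lemma image_sumS n N a r : image_sum R L n.+1 N a r =
  image_sum R L n N (a + 1) (r - 1) + image_sum R L n N (a - 1) r.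
Proof.
by rewrite /image_sum -big_split; apply: eq_bigr => j _; rewrite image_termS.
Qed.

Lemma image_sum_at0 n N r : image_sum R L n N 0 r = 0.
Proof. by rewrite /image_sum big1 // => j _; rewrite /image_term addr0 subrr. Qed.

(* At a = L the second family of images is the first one shifted by one
   period, so the sum telescopes; the bounds on r put the two remaining
   binomial coefficients outside [0, n]. *)
Lemma image_sum_atL n N (r : int) : (0 < L)%N -> (n < N)%N ->
  1 - L%:Z + n%:Z <= 2 * r <= n%:Z - 1 -> image_sum R L n N L%:Z r = 0.
Proof.
move=> L_gt0 n_lt r_bounds.
rewrite /image_sum -(big_mkord xpredT (fun j => image_term R L n L%:Z r (j%:Z - N%:Z))).
rewrite (@telescope_sumr_eq _ 0%N (2 * N).+1
  (fun j : nat => - (binz n (r + (j%:Z - N%:Z) * L%:Z))%:R)) //.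
  by rewrite binz_small ?binz_neg ?oppr0 ?addr0 //; nia.
move=> k _; rewrite /= opprK /image_term addrC.
suff -> : r + L%:Z + (k%:Z - N%:Z) * L%:Z = r + (k.+1%:Z - N%:Z) * L%:Z by [].
by rewrite -addn1 PoszD; ring.
Qed.

Lemma image_sum_init N (a e : nat) (r : int) : (0 < a < L)%N -> (0 < e < L)%N ->
  2 * r = e%:Z - a%:Z -> image_sum R L 0 N a r = (a == e)%:R.
Proof.
move=> a_lt e_lt r_eq.
have image_r i : (r + i * L%:Z == 0) = (i == 0) && (r == 0).
  by rewrite addr_mulz_eq0 //; lia.
have image_ra i : (r + a%:Z + i * L%:Z == 0) = false.
  have ra_neq0 : (r + a%:Z == 0) = false by apply/eqP; lia.
  by rewrite addr_mulz_eq0 ?ra_neq0 ?andbF //; lia.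
rewrite /image_sum /image_term.
under eq_bigr do rewrite !binz0 image_r image_ra subr0.
have N_lt : (N < (2 * N).+1)%N by lia.
rewrite (bigD1 (Ordinal N_lt)) //= subrr eqxx big1 ?addr0 => [|j j_neq_N].
  by congr (_%:R); apply/eqP/eqP; lia.
suff -> : (j%:Z - N%:Z == 0) = false by [].
by apply/negbTE; apply: contra j_neq_N => /eqP j_eq; apply/eqP/val_inj => /=; lia.
Qed.

Lemma image_solutionS e N n a : image_solution R L e N n.+1 a =
  image_solution R L e N n (a + 1) + image_solution R L e N n (a - 1).
Proof.
rewrite /image_solution; case: ifPn => [/eqP parity|/eqP parity].
  rewrite !ifT; try by apply/eqP; lia.
  by rewrite image_sumS; congr (image_sum _ _ _ _ _ _ + image_sum _ _ _ _ _ _); lia.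
by rewrite !ifF ?addr0 //; apply/negbTE/eqP; lia.
Qed.

Lemma image_solution_half e N n a (r : int) : 2 * r = e%:Z - a + n%:Z ->
  image_solution R L e N n a = image_sum R L n N a r.
Proof.
move=> r_eq; rewrite /image_solution ifT; last by apply/eqP; lia.
by congr (image_sum _ _ _ _ _ _); lia.
Qed.

Lemma image_solution_init e N (a : nat) : (0 < a < L)%N -> (0 < e < L)%N ->
  image_solution R L e N 0 a%:Z = (a == e)%:R.
Proof.
move=> a_lt e_lt; rewrite /image_solution; case: ifPn => [/eqP parity|/eqP parity].
  by apply: image_sum_init => //; lia.
by have -> : (a == e) = false by apply/eqP; lia.
Qed.

Lemma image_solution_at0 e N n : image_solution R L e N n 0 = 0.
Proof. by rewrite /image_solution image_sum_at0 if_same. Qed.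

Lemma image_solution_atL e N n : (0 < e < L)%N -> (n < N)%N ->
  image_solution R L e N n L%:Z = 0.
Proof.
move=> e_lt n_lt; rewrite /image_solution; case: ifPn => // /eqP parity.
by apply: image_sum_atL => //; lia.
Qed.

End ImageSolution.

Section HitCountFormulas.
Variables (L : nat) (s : int).
Hypotheses (L_ge2 : (2 <= L)%N) (s_terminal : terminal L s).

Lemma neighbour_interior : (0 < neighbour L s < L)%N.
Proof. by rewrite /neighbour; case: ifP => _; lia. Qed.

Lemma hit_count_sine (R : realType) n a : (0 < a < L)%N ->
  (hit_count L s n.+1 a)%:R = sine_solution R L (neighbour L s) n a%:Z.
Proof.
have e_lt := neighbour_interior.
apply: (hit_count_solution (N := n)) => // [b b_lt|m _|].
- by rewrite sine_solution_init // hit_count1_neighbour.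
- by rewrite sine_solution_at0 sine_solution_atL //; lia.
- exact: sine_solutionS.
Qed.

Lemma hit_count_image (R : numDomainType) N n a : (n <= N)%N -> (0 < a < L)%N ->
  (hit_count L s n.+1 a)%:R = image_solution R L (neighbour L s) N n a%:Z.
Proof.
have e_lt := neighbour_interior.
apply: hit_count_solution => [b b_lt|m m_lt|].
- by rewrite image_solution_init // hit_count1_neighbour.
- by rewrite image_solution_at0 image_solution_atL.
- exact: image_solutionS.
Qed.

End HitCountFormulas.

Lemma a_paths_hit_count L s0 s t : ~~ odd (s + s0 + t) ->
  a_paths L s0 t (r_st s0 s t) = hit_count L s%:Z t s0.
Proof.
move=> even_st; rewrite /a_paths /hit_count -sum1_card big_mkcond /=.
by apply: eq_bigr => w _; rewrite inE pos_tuple_eq even_st andbC; case: (_ && _).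
Qed.

Lemma weight_tuple (R : realType) (p : R) t (w : t.-tuple bool) :
  weight p w = (1 - p) ^ (t%:Z - (count id w)%:Z) * p ^ (count id w)%:Z.
Proof.
have := count_predC id w; rewrite size_tuple (@eq_count _ (predC id) negb) // => sum_t.
have count_false : count negb w = (t - count id w)%N by lia.
have count_le : (count id w <= t)%N by lia.
by rewrite /weight count_false subzn // !exprnP mulrC.
Qed.

Lemma sum_weight_first_hit (R : realType) L s0 (p : R) s t :
  \sum_(w : t.-tuple bool)
     (if first_hit L s0 w && (pos s0 w t == s%:Z) then weight p w else 0)
  = term L s0 p (s, t).
Proof.
rewrite /term /=; case: ifPn => [odd_st|even_st].
  by apply: big1 => w _; rewrite pos_tuple_eq odd_st andbF.
rewrite a_paths_hit_count // /hit_count natr_sum mulr_sumr; apply: eq_bigr => w _.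
rewrite pos_tuple_eq even_st /=; case: ifPn => [/andP[_ /eqP <-]|_].
  by rewrite mulr1 weight_tuple.
by rewrite mulr0.
Qed.

Lemma prob_term_atE (R : realType) L s0 (p lam0 lamL g : R) t : (0 < L)%N ->
  prob_term_at L s0 p lam0 lamL g t =
  \sum_(s <- [:: 0%N; L])
     (if lam lam0 lamL s%:Z - t%:R == g then term L s0 p (s, t) else 0).
Proof.
move=> L_gt0; rewrite /prob_term_at big_mkcond /=.
transitivity (\sum_(w : t.-tuple bool) \sum_(s <- [:: 0%N; L])
   (if first_hit L s0 w && (pos s0 w t == s%:Z) && (lam lam0 lamL s%:Z - t%:R == g)
    then weight p w else 0)).
  apply: eq_bigr => w _; rewrite big_cons big_seq1.
  case hit: (first_hit L s0 w) => /=; last by rewrite addr0.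
  have := first_hit_terminal hit; rewrite size_tuple.
  have L_neq0 : (L%:Z == 0) = false by apply/eqP; lia.
  by case/orP => /eqP->; rewrite eqxx ?L_neq0 ?(eq_sym 0) ?L_neq0 ?addr0 ?add0r.
rewrite exchange_big; apply: eq_bigr => s _; case: eqP => _.
  by rewrite -sum_weight_first_hit; apply: eq_bigr => w _; rewrite andbT.
by rewrite big1 // => w _; rewrite andbF.
Qed.

Lemma term_t0 (R : realType) L s0 (p : R) s : (0 < s0 < L)%N ->
  term L s0 p (s, 0%N) = 0.
Proof.
move=> s0_interior; rewrite -sum_weight_first_hit big_tuple0.
rewrite first_hitE /terminal /= pos0.
by have -> : (s0%:Z == 0) || (s0%:Z == L%:Z) = false by apply/negbTE; lia.
Qed.

Lemma Cg_bounded (R : realType) L (lam0 lamL g : R) :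
  exists N, forall st, Cg L lam0 lamL g st -> (st.2 < N)%N.
Proof.
exists (Num.truncn (lam0 - g) + Num.truncn (lamL - g)).+1 => -[s t] [_ [_ /= g_eq]].
have -> : t = Num.truncn (lam lam0 lamL s%:Z - g).
  by rewrite g_eq (_ : _ - _ = t%:R) ?natrK //; ring.
by rewrite /lam; case: ifP => _; lia.
Qed.

Lemma Cg_pairE (R : realType) L (lam0 lamL g : R) s t :
  s \in [:: 0%N; L] -> (0 < t)%N ->
  `[< Cg L lam0 lamL g (s, t) >] = (lam lam0 lamL s%:Z - t%:R == g).
Proof.
move=> s_in t_gt0; apply/asboolP/eqP => [[_ [_ ->]] //|g_eq].
split; last by split.
by move: s_in; rewrite !inE => /orP[] /eqP->; [left | right].
Qed.

Lemma prob_term_at_cvg (R : realType) L s0 (p lam0 lamL g : R) :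
  (2 <= L)%N -> (0 < s0 < L)%N ->
  series (prob_term_at L s0 p lam0 lamL g) @ \oo -->
    \sum_(st \in Cg L lam0 lamL g) term L s0 p st.
Proof.
move=> L_ge2 s0_interior; have [N Cg_lt] := Cg_bounded L lam0 lamL g.
apply: cvg_near_cst; apply: filterS (nbhs_infty_ge N) => n N_le.
set F := fun st => if `[< Cg L lam0 lamL g st >] then term L s0 p st else 0.
rewrite (eq_fsbigr F); last by move=> st; rewrite inE /F => Cg_st; rewrite asboolT.
have CgE st : Cg L lam0 lamL g st -> st.1 \in [:: 0%N; L].
  by case=> -[] ->; rewrite !inE eqxx ?orbT.
rewrite (fsbig_fwiden [seq (s, t) | s <- [:: 0%N; L], t <- iota 0 n]).
- rewrite big_allpairs seriesEnat /= exchange_big /index_iota subn0.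
  apply: eq_bigr => t _; rewrite prob_term_atE; last lia.
  apply: eq_big_seq => s s_in; rewrite /F.
  case: t => [|t]; first by rewrite term_t0 // !if_same.
  by rewrite Cg_pairE.
- move=> [s t] Cg_st; apply: allpairs_f; first exact: CgE Cg_st.
  by rewrite mem_iota; have /= := Cg_lt _ Cg_st; lia.
- rewrite allpairs_uniq ?iota_uniq //=; last by move=> [? ?] [? ?] _ _ [-> ->].
  by rewrite inE andbT; apply/eqP; lia.
- by move=> [s t] [_ Cg_st]; rewrite /F /= asboolF.
Qed.

Lemma r'_st_neighbour L s0 s n : s = 0%N \/ s = L -> ~~ odd (s + s0 + n.+1) ->
  2 * r'_st s0 s n.+1 = (neighbour L s%:Z)%:Z - s0%:Z + n%:Z.
Proof.
rewrite -eqb0 -modn2 /r'_st /r_st /neighbour => s_term /eqP parity.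
case: s_term parity => -> parity; first by rewrite !eqxx /=; lia.
have [L0|L_gt0] := posnP L; first by move: parity; rewrite L0 !eqxx /=; lia.
by rewrite ifF; [lia | apply/eqP; lia].
Qed.

Section PathCounts.
Variables (L s0 s : nat).
Hypotheses (L_ge2 : (2 <= L)%N) (s0_interior : (0 < s0 < L)%N).
Hypothesis s_term : s = 0%N \/ s = L.

Let s_terminal : terminal L s%:Z.
Proof. by case: s_term => ->; rewrite /terminal eqxx ?orbT. Qed.

Lemma a_paths_zsum (R : realType) t : (0 < t)%N -> ~~ odd (s + s0 + t) ->
  zsum_to (binom_term (R:=R) L s0 t.-1 (r'_st s0 s t))
          (a_paths L s0 t (r_st s0 s t))%:R.
Proof.
case: t => [//|n] _ parity; rewrite a_paths_hit_count //.
apply: cvg_near_cst; apply: filterS (nbhs_infty_ge n) => N n_le.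
rewrite (hit_count_image L_ge2 s_terminal _ n_le) //.
by rewrite (image_solution_half _ _ _ (r'_st_neighbour s_term parity)).
Qed.

Lemma a_paths_trig_sum (R : realType) t : (0 < t)%N -> ~~ odd (s + s0 + t) ->
  odd L || (2 <= t)%N ->
  (a_paths L s0 t (r_st s0 s t))%:R = trig_sum L s0 t.-1 (r'_st s0 s t) :> R.
Proof.
case: t => [//|n] _ parity L_odd_or_t.
rewrite a_paths_hit_count // (hit_count_sine L_ge2 s_terminal) //.
rewrite (@trig_sum_sine_solution R L (neighbour L s) n s0) //.
by have := r'_st_neighbour s_term parity; lia.
Qed.

End PathCounts.

Theorem theorem1 (R : realType) (L s0 : nat) (p lam0 lamL : R) :
  (2 <= L)%N -> (1 <= s0)%N -> (s0 <= L - 1)%N -> 0 <= p <= 1 ->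
  (forall g : R,
     series (prob_term_at L s0 p lam0 lamL g) @ \oo -->
       (\sum_(st \in Cg L lam0 lamL g) term L s0 p st))
  /\
  (forall s t : nat, (s = 0%N \/ s = L) -> (1 <= t)%N -> ~~ odd (s + s0 + t) ->
     zsum_to (binom_term (R:=R) L s0 t.-1 (r'_st s0 s t))
             (a_paths L s0 t (r_st s0 s t))%:R
     /\ ((odd L || (2 <= t)%N) ->
         (a_paths L s0 t (r_st s0 s t))%:R = trig_sum L s0 t.-1 (r'_st s0 s t) :> R)).
Proof.
(* Both sides are polynomials in p. *)
move=> L_ge2 s0_ge1 s0_le _; have s0_interior : (0 < s0 < L)%N by lia.
split=> [g|s t s_term t_gt0 parity]; first exact: prob_term_at_cvg.
by split; [exact: a_paths_zsum | exact: a_paths_trig_sum].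
Qed.
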